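(* Let $u$ be the root of $P_{(1,3)}^{(1)}$ and $v$ the root of $P_{(2,1)}^{(2)}$, as described in the context. Then $$t_{\left (P_{(1,3)}^{(1)},u\right )}(\lambda )<t_{\left (P_{(2,1)}^{(2)},v\right )}(\lambda )\quad\mbox{for all }\lambda >2.$$
   Context: For a graph $G$, $\phi_G(\lambda)=\det(\lambda I-A(G))$ denotes its characteristic polynomial, where $A(G)$ is the adjacency matrix. For $\lambda>2$, let $x_1=\frac{\lambda-\sqrt{\lambda^2-4}}{2}$ and $x_2=\frac{\lambda+\sqrt{\lambda^2-4}}{2}$ be the two roots of $x^2-\lambda x+1=0$ (so $x_1+x_2=\lambda$, $x_1x_2=1$, $x_1<1<x_2$). For a rooted graph $(G,v)$ (a graph $G$ with a designated vertex $v$), the functions $p_{(G,v)}$ and $q_{(G,v)}$ are defined by $\phi_G=p_{(G,v)}+q_{(G,v)}$ and $\phi_{G-v}=x_2p_{(G,v)}+x_1q_{(G,v)}$, where $G-v$ is $G$ with vertex $v$ deleted, and $t_{(G,v)}:=q_{(G,v)}/p_{(G,v)}$. The graph $P_{(1,3)}^{(1)}$ is the tree with exactly one vertex of degree $3$ from which three pendent paths of lengths $1$, $1$ and $3$ emanate (6 vertices); its root $u$ is the vertex on the length-$3$ path at distance $2$ from the degree-$3$ vertex (i.e. the neighbour of that path's endpoint). The graph $P_{(2,1)}^{(2)}$ is the tree with exactly one vertex of degree $3$ from which three pendent paths of lengths $2$, $2$ and $1$ emanate (6 vertices); its root $v$ is the endpoint of the length-$1$ path. *)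

From HB Require Import structures.
From mathcomp Require Import all_boot all_order all_algebra.
From mathcomp Require Import reals.
Set Implicit Arguments. Unset Strict Implicit. Unset Printing Implicit Defensive.
Import Order.TTheory GRing.Theory Num.Theory.
Local Open Scope ring_scope.

Definition edge_of (n : nat) (s : seq (nat * nat)) (i j : 'I_n) : bool :=
  ((nat_of_ord i, nat_of_ord j) \in s) || ((nat_of_ord j, nat_of_ord i) \in s).

Definition adj_mx (R : nzRingType) (n : nat) (s : seq (nat * nat)) : 'M[R]_n :=
  \matrix_(i, j) (edge_of s i j)%:R.

Definition phi (R : comNzRingType) (n : nat) (A : 'M[R]_n) (l : R) : R :=
  (char_poly A).[l].

Definition del_vtx (R : Type) (n : nat) (A : 'M[R]_n.+1) (v : 'I_n.+1) : 'M[R]_n :=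
  row' v (col' v A).

Section Rooted.
Variable R : realType.

Definition x1 (l : R) : R := (l - Num.sqrt (l ^+ 2 - 4)) / 2.
Definition x2 (l : R) : R := (l + Num.sqrt (l ^+ 2 - 4)) / 2.

(* p, q : the unique solution of  phi_G = p + q,  phi_{G-v} = x2 p + x1 q
   (unique for l > 2 since x1 <> x2). *)
Definition p_rt (n : nat) (A : 'M[R]_n.+1) (v : 'I_n.+1) (l : R) : R :=
  (phi (del_vtx A v) l - x1 l * phi A l) / (x2 l - x1 l).
Definition q_rt (n : nat) (A : 'M[R]_n.+1) (v : 'I_n.+1) (l : R) : R :=
  (x2 l * phi A l - phi (del_vtx A v) l) / (x2 l - x1 l).
Definition t_rt (n : nat) (A : 'M[R]_n.+1) (v : 'I_n.+1) (l : R) : R :=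
  q_rt A v l / p_rt A v l.
End Rooted.

(* P_{(1,3)}^{(1)}: centre 0; pendent paths 0-1, 0-2, 0-3-4-5; root u = 4. *)
Definition P13_1_edges : seq (nat * nat) := [:: (0,1); (0,2); (0,3); (3,4); (4,5)]%N.
Definition P13_1 (R : realType) : 'M[R]_6 := adj_mx R 6 P13_1_edges.
Definition root_u : 'I_6 := inord 4.

(* P_{(2,1)}^{(2)}: centre 0; pendent paths 0-1-2, 0-3-4, 0-5; root v = 5. *)
Definition P21_2_edges : seq (nat * nat) := [:: (0,1); (1,2); (0,3); (3,4); (0,5)]%N.
Definition P21_2 (R : realType) : 'M[R]_6 := adj_mx R 6 P21_2_edges.
Definition root_v : 'I_6 := inord 5.

From mathcomp Require Import all_boot all_order all_algebra reals ring lra.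
Import Order.TTheory GRing.Theory Num.Theory.
Set Implicit Arguments. Unset Strict Implicit. Unset Printing Implicit Defensive.
Local Open Scope ring_scope.

(* Solving the defining
   system, t = (x2 a - b) / (b - x1 a) with a = phi_G and b = phi_{G-v}; for positive
   denominators b - x1 a, comparing two such ratios reduces to the sign of a2 b1 - a1 b2,
   which here is l^3 (l^2 - 1) (l^2 - 3) (l^2 - 4) > 0. Writing l = y + 1/y with y = x1,
   both denominators are y^-7 times polynomials in y that are positive on (0, 1). *)

Section DetOfNatIndexed.
Variable R : comNzRingType.

Definition mx_of n (F : nat -> nat -> R) : 'M[R]_n := \matrix_(i, j) F i j.

Lemma det_mx_of0 (F : nat -> nat -> R) : \det (mx_of 0 F) = 1.
Proof. exact: det_mx00. Qed.

Lemma expand_det_mx_of n (F : nat -> nat -> R) :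
  \det (mx_of n.+1 F) =
  \sum_(j < n.+1) F 0%N j * ((-1) ^+ j * \det (mx_of n (fun i k => F i.+1 (bump j k)))).
Proof.
rewrite (expand_det_row _ ord0); apply: eq_bigr => j _.
rewrite /cofactor !mxE add0n; congr (_ * (_ * \det _)).
by apply/matrixP => i k; rewrite !mxE.
Qed.

Lemma phiE n (A : 'M[R]_n) l :
  phi A l = \det (\matrix_(i, j) (l *+ (i == j) - A i j)).
Proof.
rewrite /phi /char_poly -[_.[l]]/(horner_eval l _) -det_map_mx.
congr (\det _); apply/matrixP => i j.
by rewrite !mxE /= !horner_evalE hornerD hornerN hornerMn hornerX hornerC.
Qed.

Lemma phi_adj_mx n s (adj : nat -> nat -> bool) l :
  (forall i j : 'I_n, edge_of s i j = adj i j) ->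
  phi (adj_mx R n s) l = \det (mx_of n (fun p q => l *+ (p == q) - (adj p q)%:R)).
Proof.
by move=> adjE; rewrite phiE; congr (\det _); apply/matrixP => i j; rewrite !mxE adjE.
Qed.

Lemma phi_del_vtx_adj n s (adj : nat -> nat -> bool) (v : 'I_n.+1) k l :
  (forall i j : 'I_n.+1, edge_of s i j = adj i j) -> v = k :> nat ->
  phi (del_vtx (adj_mx R n.+1 s) v) l =
  \det (mx_of n (fun p q => l *+ (p == q) - (adj (bump k p) (bump k q))%:R)).
Proof.
move=> adjE vk; rewrite phiE; congr (\det _); apply/matrixP => i j.
by rewrite !mxE adjE /= vk.
Qed.
End DetOfNatIndexed.

Arguments mx_of : simpl never.

Ltac expand_det_step :=
  rewrite !expand_det_mx_of !big_ord_recl !big_ord0 /=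
    ?mulr0n ?mulr1n ?subr0 ?sub0r ?mul0r ?mulr0 ?add0r ?addr0.

(* The edge relations as pattern matches, which [simpl] evaluates much faster than
   membership in the edge lists during the cofactor expansions. *)
Definition P13_1_adj (p q : nat) : bool :=
  match p, q with
  | 0, 1 | 1, 0 | 0, 2 | 2, 0 | 0, 3 | 3, 0 | 3, 4 | 4, 3 | 4, 5 | 5, 4 => true
  | _, _ => false
  end%N.

Definition P21_2_adj (p q : nat) : bool :=
  match p, q with
  | 0, 1 | 1, 0 | 1, 2 | 2, 1 | 0, 3 | 3, 0 | 3, 4 | 4, 3 | 0, 5 | 5, 0 => true
  | _, _ => false
  end%N.

Lemma P13_1_adjE (i j : 'I_6) : edge_of P13_1_edges i j = P13_1_adj i j.
Proof. by case: i j => [[|[|[|[|[|[|?]]]]]] ?] [[|[|[|[|[|[|?]]]]]] ?]. Qed.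

Lemma P21_2_adjE (i j : 'I_6) : edge_of P21_2_edges i j = P21_2_adj i j.
Proof. by case: i j => [[|[|[|[|[|[|?]]]]]] ?] [[|[|[|[|[|[|?]]]]]] ?]. Qed.

Section CharPolys.
Variables (R : realType) (l : R).

Lemma phi_P13_1 : phi (P13_1 R) l = l^+6 - 5 * l^+4 + 5 * l^+2.
Proof. by rewrite (phi_adj_mx _ P13_1_adjE); do 6 expand_det_step; rewrite det_mx_of0; ring. Qed.

Lemma phi_P13_1_del : phi (del_vtx (P13_1 R) root_u) l = l^+5 - 3 * l^+3.
Proof.
rewrite (phi_del_vtx_adj _ P13_1_adjE (k := 4)) ?inordK //.
by do 5 expand_det_step; rewrite det_mx_of0; ring.
Qed.

Lemma phi_P21_2 : phi (P21_2 R) l = l^+6 - 5 * l^+4 + 5 * l^+2 - 1.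
Proof. by rewrite (phi_adj_mx _ P21_2_adjE); do 6 expand_det_step; rewrite det_mx_of0; ring. Qed.

Lemma phi_P21_2_del : phi (del_vtx (P21_2 R) root_v) l = l^+5 - 4 * l^+3 + 3 * l.
Proof.
rewrite (phi_del_vtx_adj _ P21_2_adjE (k := 5)) ?inordK //.
by do 5 expand_det_step; rewrite det_mx_of0; ring.
Qed.

End CharPolys.

Section QuadraticRoots.
Variables (R : realType) (l : R).
Hypothesis l_gt2 : 2 < l.

Let disc_gt0 : 0 < l ^+ 2 - 4.
Proof. move: l_gt2; nra. Qed.
Let sqrt_disc_sqr : Num.sqrt (l ^+ 2 - 4) ^+ 2 = l ^+ 2 - 4.
Proof. exact/sqr_sqrtr/ltW. Qed.
Let sqrt_disc_lt : Num.sqrt (l ^+ 2 - 4) < l.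
Proof.
have l_gt0 : 0 < l by apply: lt_trans l_gt2.
by rewrite -[X in _ < X]gtr0_norm // -sqrtr_sqr ltr_sqrt ?exprn_gt0 //; lra.
Qed.

Let sqrt_disc_gt : l - 2 < Num.sqrt (l ^+ 2 - 4).
Proof.
have l2_gt0 : 0 < l - 2 by rewrite subr_gt0.
by rewrite -[X in X < _]gtr0_norm // -sqrtr_sqr ltr_sqrt //; move: l_gt2; nra.
Qed.

Lemma x1_mul_x2 : x1 l * x2 l = 1.
Proof.
rewrite /x1 /x2; set s := Num.sqrt _.
have -> : (l - s) / 2 * ((l + s) / 2) = (l ^+ 2 - s ^+ 2) / 4 by field.
by rewrite sqrt_disc_sqr; field.
Qed.

Lemma x1_gt0 : 0 < x1 l.
Proof. by rewrite /x1 divr_gt0 // subr_gt0. Qed.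

Lemma x1_lt1 : x1 l < 1.
Proof. by rewrite /x1 ltr_pdivrMr // mul1r; move: sqrt_disc_gt; lra. Qed.

Lemma x2_x1V : x2 l = (x1 l)^-1.
Proof.
have x1_neq0 : x1 l != 0 by rewrite gt_eqF ?x1_gt0.
by apply: (mulfI x1_neq0); rewrite x1_mul_x2 mulfV.
Qed.

Lemma x1_addV : x1 l + (x1 l)^-1 = l.
Proof. by rewrite -x2_x1V /x1 /x2; field. Qed.

Lemma x1_lt_x2 : x1 l < x2 l.
Proof. by rewrite x2_x1V (lt_trans x1_lt1) // invf_gt1 // ?x1_gt0 ?x1_lt1. Qed.

End QuadraticRoots.

Lemma t_rtE (R : realType) n (A : 'M[R]_n.+1) v l : 2 < l ->
  t_rt A v l =
  (x2 l * phi A l - phi (del_vtx A v) l) / (phi (del_vtx A v) l - x1 l * phi A l).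
Proof.
move=> l_gt2; rewrite /t_rt /p_rt /q_rt invf_div mulrA divfK //.
by rewrite subr_eq0 gt_eqF // x1_lt_x2.
Qed.

Lemma ltr_ratio_cross (R : realFieldType) (x y a1 b1 a2 b2 : R) :
  y < x -> y * a1 < b1 -> y * a2 < b2 -> a1 * b2 < a2 * b1 ->
  (x * a1 - b1) / (b1 - y * a1) < (x * a2 - b2) / (b2 - y * a2).
Proof.
move=> xy d1 d2 w.
rewrite ltr_pdivrMr ?subr_gt0 // mulrAC ltr_pdivlMr ?subr_gt0 // -subr_gt0.
have -> : (x * a2 - b2) * (b1 - y * a1) - (x * a1 - b1) * (b2 - y * a2) =
  (x - y) * (a2 * b1 - a1 * b2) by ring.
by rewrite mulr_gt0 ?subr_gt0.
Qed.

Lemma P13_1_root_gap (R : realType) (l : R) : 2 < l ->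
  x1 l * phi (P13_1 R) l < phi (del_vtx (P13_1 R) root_u) l.
Proof.
move=> l_gt2; rewrite phi_P13_1 phi_P13_1_del.
move: (x1_gt0 l_gt2) (x1_lt1 l_gt2) (x1_addV l_gt2); move: (x1 l) => y y_gt0 y_lt1 <-.
have y_neq0 : y != 0 by rewrite gt_eqF.
rewrite -subr_gt0.
have -> : (y + y^-1) ^+ 5 - 3 * (y + y^-1) ^+ 3
          - y * ((y + y^-1) ^+ 6 - 5 * (y + y^-1) ^+ 4 + 5 * (y + y^-1) ^+ 2) =
          (y ^+ 4 + y ^+ 6 + y ^+ 8 + 2 * y ^+ 10 - y ^+ 14) / y ^+ 7 by field.
rewrite divr_gt0 ?exprn_gt0 //.
have : y ^+ 14 < y ^+ 4 by rewrite ltr_iXn2l.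
have := exprn_gt0 6 y_gt0; have := exprn_gt0 8 y_gt0; have := exprn_gt0 10 y_gt0.
lra.
Qed.

Lemma P21_2_root_gap (R : realType) (l : R) : 2 < l ->
  x1 l * phi (P21_2 R) l < phi (del_vtx (P21_2 R) root_v) l.
Proof.
move=> l_gt2; rewrite phi_P21_2 phi_P21_2_del.
move: (x1_gt0 l_gt2) (x1_lt1 l_gt2) (x1_addV l_gt2); move: (x1 l) => y y_gt0 y_lt1 <-.
have y_neq0 : y != 0 by rewrite gt_eqF.
rewrite -subr_gt0.
have -> : (y + y^-1) ^+ 5 - 4 * (y + y^-1) ^+ 3 + 3 * (y + y^-1)
          - y * ((y + y^-1) ^+ 6 - 5 * (y + y^-1) ^+ 4 + 5 * (y + y^-1) ^+ 2 - 1) =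
          (y ^+ 6 + 2 * y ^+ 8 + y ^+ 10 - y ^+ 14) / y ^+ 7 by field.
rewrite divr_gt0 ?exprn_gt0 //.
have : y ^+ 14 < y ^+ 6 by rewrite ltr_iXn2l.
have := exprn_gt0 8 y_gt0; have := exprn_gt0 10 y_gt0.
lra.
Qed.

Lemma P13_1_P21_2_cross_lt (R : realType) (l : R) : 2 < l ->
  phi (P13_1 R) l * phi (del_vtx (P21_2 R) root_v) l <
  phi (P21_2 R) l * phi (del_vtx (P13_1 R) root_u) l.
Proof.
move=> l_gt2; rewrite phi_P13_1 phi_P13_1_del phi_P21_2 phi_P21_2_del -subr_gt0.
have -> : (l ^+ 6 - 5 * l ^+ 4 + 5 * l ^+ 2 - 1) * (l ^+ 5 - 3 * l ^+ 3)
          - (l ^+ 6 - 5 * l ^+ 4 + 5 * l ^+ 2) * (l ^+ 5 - 4 * l ^+ 3 + 3 * l) =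
          l ^+ 3 * (l ^+ 2 - 1) * (l ^+ 2 - 3) * (l ^+ 2 - 4) by ring.
have l2_gt4 : 4 < l ^+ 2 by move: l_gt2; nra.
by rewrite !mulr_gt0 ?exprn_gt0 ?subr_gt0 //; lra.
Qed.

Theorem lemma2p9 (R : realType) (l : R) :
  2 < l -> t_rt (P13_1 R) root_u l < t_rt (P21_2 R) root_v l.
Proof.
move=> l_gt2; rewrite !t_rtE //.
apply: ltr_ratio_cross.
- exact: x1_lt_x2.
- exact: P13_1_root_gap.
- exact: P21_2_root_gap.
- exact: P13_1_P21_2_cross_lt.
Qed.
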